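(* Let $Z_{C_2}$ be the set of $\boldsymbol{x}\in\mathbb{R}^n$ for which there exist $\lambda\ge0$, $\alpha_t\ge0$, $s_i\ge0$, $\boldsymbol{z}_{it}\in\mathbb{R}^m$ ($i\in[N],t\in[T]$) with $\lambda\delta+\frac1N\sum_{i=1}^Ns_i\le\epsilon$, $G_{f_t}(\boldsymbol{z}_{it},\alpha_t,\boldsymbol{x})+1-\boldsymbol{z}_{it}^{\top}\boldsymbol{\zeta}^i-s_i\le0$ and $\|\boldsymbol{z}_{it}\|_*\le\lambda$ for all $i\in[N],t\in[T]$. Let $\tilde Z_{C_2}$ be the set of $\boldsymbol{x}\in\mathbb{R}^n$ for which there exist $\alpha_t>0$, $q_{it}\ge0$ and $\boldsymbol{v}_{it}\in\mathbb{R}^m$ ($i\in[N],t\in[T]$) such that for all $i\in[N],t\in[T]$: $$\|\boldsymbol{v}_{it}\|_*\delta+\frac1N\sum_{j=1}^Nq_{jt}\le\epsilon\alpha_t,\qquad G_{f_t}(\boldsymbol{v}_{it},1,\boldsymbol{x})+\alpha_t-\boldsymbol{v}_{it}^{\top}\boldsymbol{\zeta}^i-q_{it}\le0.$$ Then $Z_{C_2}\subseteq\tilde Z_{C_2}$, and $\tilde Z_{C_2}$ is a convex set.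
   Context: Here $G_{f_t}(\boldsymbol{z},\alpha,\boldsymbol{x})=\sup_{\boldsymbol{\xi}\in\Xi}[\boldsymbol{z}^{\top}\boldsymbol{\xi}-\alpha f_t(\boldsymbol{x},\boldsymbol{\xi})]$. Setting: $\epsilon\in(0,1)$, $\delta>0$, $[T]=\{1,\dots,T\}$; $\Xi\subseteq\mathbb{R}^m$ nonempty closed convex; each $f_t:\mathbb{R}^n\times\Xi\to\mathbb{R}$ convex continuous in $\boldsymbol{\xi}$ for fixed $\boldsymbol{x}$ and concave continuous in $\boldsymbol{x}$ for fixed $\boldsymbol{\xi}$; $\boldsymbol{\zeta}^1,\dots,\boldsymbol{\zeta}^N\in\Xi$ given samples; $\|\cdot\|_*$ is the dual norm of a norm $\|\cdot\|$ on $\mathbb{R}^m$. *)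

From HB Require Import structures.
From mathcomp Require Import all_boot all_order all_algebra.
From mathcomp Require Import all_classical all_reals all_analysis.
Set Implicit Arguments. Unset Strict Implicit. Unset Printing Implicit Defensive.
Import Order.TTheory GRing.Theory Num.Theory.
Import numFieldNormedType.Exports.
Local Open Scope classical_set_scope.
Local Open Scope ring_scope.

Definition dotv {R : realType} {k : nat} (z xi : 'rV[R]_k) : R :=
  \sum_(j < k) z 0 j * xi 0 j.

Definition is_norm {R : realType} {k : nat} (nrm : 'rV[R]_k -> R) : Prop :=
  [/\ forall x, 0 <= nrm x,
      forall x, nrm x = 0 -> x = 0,
      forall (c : R) x, nrm (c *: x) = `|c| * nrm x &
      forall x y, nrm (x + y) <= nrm x + nrm y].

Definition dual_norm {R : realType} {k : nat} (nrm : 'rV[R]_k -> R)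
  (z : 'rV[R]_k) : R :=
  sup [set dotv z xi | xi in [set xi | nrm xi <= 1]].

Definition Gf {R : realType} {n m : nat} (Xi : set 'rV[R]_m)
  (f : 'rV[R]_n -> 'rV[R]_m -> R) (z : 'rV[R]_m) (alpha : R) (x : 'rV[R]_n)
  : \bar R :=
  ereal_sup [set (dotv z xi - alpha * f x xi)%:E | xi in Xi].

Definition convex_on {R : realType} {k : nat} (D : set 'rV[R]_k)
  (g : 'rV[R]_k -> R) : Prop :=
  forall a b, D a -> D b -> forall l : R, 0 <= l <= 1 ->
    g (l *: a + (1 - l) *: b) <= l * g a + (1 - l) * g b.

Definition concave_on {R : realType} {k : nat} (D : set 'rV[R]_k)
  (g : 'rV[R]_k -> R) : Prop :=
  forall a b, D a -> D b -> forall l : R, 0 <= l <= 1 ->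
    l * g a + (1 - l) * g b <= g (l *: a + (1 - l) *: b).

Definition Z_C2 {R : realType} {n m N T : nat} (nrm : 'rV[R]_m -> R)
  (Xi : set 'rV[R]_m) (f : 'I_T -> 'rV[R]_n -> 'rV[R]_m -> R)
  (zeta : 'I_N -> 'rV[R]_m) (eps delta : R) : set 'rV[R]_n :=
  [set x | exists (lam : R) (alpha : 'I_T -> R) (s : 'I_N -> R)
              (z : 'I_N -> 'I_T -> 'rV[R]_m),
     [/\ 0 <= lam, (forall t, 0 <= alpha t), (forall i, 0 <= s i),
         lam * delta + N%:R^-1 * (\sum_(i < N) s i) <= eps &
         forall i t,
           (Gf Xi (f t) (z i t) (alpha t) x
              + (1 - dotv (z i t) (zeta i) - s i)%:E <= 0)%E
           /\ dual_norm nrm (z i t) <= lam]].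

Definition Zt_C2 {R : realType} {n m N T : nat} (nrm : 'rV[R]_m -> R)
  (Xi : set 'rV[R]_m) (f : 'I_T -> 'rV[R]_n -> 'rV[R]_m -> R)
  (zeta : 'I_N -> 'rV[R]_m) (eps delta : R) : set 'rV[R]_n :=
  [set x | exists (alpha : 'I_T -> R) (q : 'I_N -> 'I_T -> R)
              (v : 'I_N -> 'I_T -> 'rV[R]_m),
     [/\ (forall t, 0 < alpha t), (forall i t, 0 <= q i t) &
         forall i t,
           dual_norm nrm (v i t) * delta + N%:R^-1 * (\sum_(j < N) q j t)
             <= eps * alpha t
           /\ (Gf Xi (f t) (v i t) 1 x
                 + (alpha t - dotv (v i t) (zeta i) - q i t)%:E <= 0)%E]].

From HB Require Import structures.
From mathcomp Require Import all_boot all_order all_algebra.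
From mathcomp Require Import all_classical all_reals all_analysis.
From mathcomp Require Import ring lra.
Import Order.TTheory GRing.Theory Num.Theory.
Import numFieldNormedType.Exports.
Local Open Scope classical_set_scope.
Local Open Scope ring_scope.

Set Implicit Arguments.
Unset Strict Implicit.

(* For alpha > 0, G_f(z, alpha, x) = alpha G_f(z / alpha, 1, x), and the dual
   norm is positively homogeneous; hence dividing a certificate
   (lambda, alpha, s, z) of Z_C2 by alpha_t yields the certificate
   (1 / alpha_t, s / alpha_t, z / alpha_t) of \tilde Z_C2.  The case alpha_t = 0
   is excluded: the constraint at xi = zeta^i would force every s_i >= 1,
   against the budget (1/N) sum_i s_i <= eps < 1.  The set \tilde Z_C2 is
   convex because each of its constraints is jointly convex in (alpha, q, v, x):
   the dual norm is sublinear, and G_f(v, 1, x) is a supremum of functions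
   affine in v and convex in x, f_t being concave in x.  No other property of
   Xi or f_t is needed.

   The dual norm is a supremum of reals, so it is meaningful (and sublinear)
   only because the unit ball of a norm on R^m is bounded; this follows from
   the compactness of the unit sphere of the max-norm. *)

Lemma rV_entry_le_norm (R : realDomainType) k (x : 'rV[R]_k) j :
  `|x 0 j| <= `|x|.
Proof.
have /mapP[j' _ ->] : `|x 0 j| \in [seq `|x y.1 y.2| | y : 'I_1 * 'I_k].
  by apply/mapP; exists (0, j) => //=; rewrite mem_enum.
by rewrite [leRHS]/Num.norm /= mx_normrE; apply/bigmax_geP; right; exists j'.
Qed.

Section dotv.
Variables (R : realType) (k : nat).
Implicit Types (v w xi : 'rV[R]_k).

Lemma dotvDl v w xi : dotv (v + w) xi = dotv v xi + dotv w xi.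
Proof. by rewrite /dotv -big_split; apply: eq_bigr => j _; rewrite mxE mulrDl. Qed.

Lemma dotvZl (c : R) v xi : dotv (c *: v) xi = c * dotv v xi.
Proof. by rewrite /dotv mulr_sumr; apply: eq_bigr => j _; rewrite mxE mulrA. Qed.

Lemma dotv_le_norm v xi : dotv v xi <= (\sum_j `|v 0 j|) * `|xi|.
Proof.
apply: le_trans (ler_norm _) _; apply: le_trans (ler_norm_sum _ _ _) _.
rewrite mulr_suml; apply: ler_sum => j _.
by rewrite normrM ler_wpM2l // rV_entry_le_norm.
Qed.

End dotv.

Section is_norm.
Variables (R : realType) (k : nat) (nrm : 'rV[R]_k -> R).
Hypothesis nrmP : is_norm nrm.

Lemma is_norm0 : nrm 0 = 0.
Proof.
have [_ _ nrmZ _] := nrmP.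
by rewrite -(scale0r (0 : 'rV[R]_k)) nrmZ normr0 mul0r.
Qed.

Lemma is_normN x : nrm (- x) = nrm x.
Proof. have [_ _ nrmZ _] := nrmP; by rewrite -scaleN1r nrmZ normrN normr1 mul1r. Qed.

Lemma is_norm_sum (I : finType) (F : I -> 'rV[R]_k) :
  nrm (\sum_i F i) <= \sum_i nrm (F i).
Proof.
have [_ _ _ nrmD] := nrmP.
apply: (big_ind2 (fun x b => nrm x <= b)) => //; first by rewrite is_norm0.
by move=> x1 x2 b1 b2 h1 h2; apply: le_trans (nrmD _ _) (lerD h1 h2).
Qed.

Lemma is_norm_ubound : exists2 K, 0 <= K & forall x, nrm x <= K * `|x|.
Proof.
have [nrm_ge0 _ nrmZ _] := nrmP.
exists (\sum_j nrm (delta_mx 0 j)); first exact: sumr_ge0.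
move=> x; rewrite {1}(row_sum_delta x); apply: le_trans (is_norm_sum _) _.
rewrite mulr_suml; apply: ler_sum => j _.
by rewrite nrmZ mulrC ler_wpM2l // rV_entry_le_norm.
Qed.

Lemma is_norm_continuous : continuous nrm.
Proof.
have [K K_ge0 nrm_ub] := is_norm_ubound.
have [_ _ _ nrmD] := nrmP.
have lipschitz x y : `|nrm x - nrm y| <= K * `|x - y|.
  have := nrm_ub (x - y); have := nrmD y (x - y); have := nrmD x (y - x).
  rewrite !subrKC -[y - x]opprB is_normN.
  by rewrite ler_norml; lra.
move=> x; apply/(@cvgrPdist_lt _ _ _ (nbhs x) (nbhs_filter x)) => e e_gt0.
have e'_gt0 : 0 < e / (K + 1) by rewrite divr_gt0 // ltr_wpDl.
near=> y.
have xy : `|x - y| < e / (K + 1).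
  by near: y; exact: (@cvgr_dist_lt _ _ _ (nbhs x) (nbhs_filter x) id x).
apply: le_lt_trans (lipschitz x y) _.
apply: le_lt_trans (ler_wpM2l K_ge0 (ltW xy)) _.
by rewrite mulrA ltr_pdivrMr ?ltr_wpDl //; nra.
Unshelve. all: by end_near.
Qed.

Lemma is_norm_lbound : exists2 c, 0 < c & forall x, c * `|x| <= nrm x.
Proof.
have [nrm_ge0 nrm_eq0 nrmZ _] := nrmP.
pose S := (fun x : 'rV[R]_k => `|x|) @^-1` [set 1].
suff [c c_gt0 Sc] : exists2 c, 0 < c & forall y, S y -> c <= nrm y.
  exists c => // x; have [->|x0] := eqVneq x 0; first by rewrite normr0 mulr0.
  have nx_gt0 : 0 < `|x| by rewrite normr_gt0.
  have : S (`|x|^-1 *: x) by rewrite /S /= normrZ normfV normr_id mulVf ?gt_eqF.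
  move=> /Sc; rewrite nrmZ ger0_norm ?invr_ge0 // => c_le.
  by rewrite -ler_pdivlMr // mulrC.
have [[y0 Sy0]|S0] := pselect (S !=set0); last first.
  by exists 1 => // y Sy; exfalso; apply: S0; exists y.
have S_compact : compact S.
  apply: bounded_closed_compact.
    exists 1; split; first exact: num_real.
    by move=> M M_gt1 x /= ->; exact: ltW.
  apply: preimage_closed; last exact: closed_eq.
  by move=> y _; exact: norm_continuous.
have [c /[1!inE] Sc c_min] := compact_EVT_min (ex_intro _ y0 Sy0) S_compact
  (continuous_subspaceT is_norm_continuous).
exists (nrm c) => [|y Sy]; last by apply: c_min; rewrite inE.
rewrite lt0r nrm_ge0 andbT; apply/eqP => /nrm_eq0 c0.
by move: Sc; rewrite /S /= c0 normr0 => /eqP; rewrite eq_sym oner_eq0.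
Qed.

Lemma has_sup_dual_norm v :
  has_sup [set dotv v xi | xi in [set xi | nrm xi <= 1]].
Proof.
have [c c_gt0 nrm_lb] := is_norm_lbound.
split; first by exists (dotv v 0), 0 => //=; rewrite is_norm0.
exists ((\sum_j `|v 0 j|) / c) => _ [xi /= xi_le1 <-].
apply: le_trans (dotv_le_norm v xi) _; apply: ler_wpM2l; first exact: sumr_ge0.
by rewrite -(ler_pM2l c_gt0) mulfV ?gt_eqF //; exact: le_trans (nrm_lb xi) xi_le1.
Qed.

Lemma dotv_le_dual_norm v xi : nrm xi <= 1 -> dotv v xi <= dual_norm nrm v.
Proof. by move=> xi_le1; apply: (sup_upper_bound (has_sup_dual_norm v)); exists xi. Qed.

Lemma dual_norm_le v b :
  (forall xi, nrm xi <= 1 -> dotv v xi <= b) -> dual_norm nrm v <= b.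
Proof.
move=> vb; apply: sup_le_ub; first by exists (dotv v 0), 0 => //=; rewrite is_norm0.
by move=> _ [xi /= xi_le1 <-]; exact: vb.
Qed.

Lemma dual_norm_sublinear (a b : R) v w : 0 <= a -> 0 <= b ->
  dual_norm nrm (a *: v + b *: w) <= a * dual_norm nrm v + b * dual_norm nrm w.
Proof.
move=> a_ge0 b_ge0; apply: dual_norm_le => xi xi_le1.
rewrite dotvDl !dotvZl.
by apply: lerD; apply: ler_wpM2l => //; exact: dotv_le_dual_norm.
Qed.

Lemma dual_normZ_le (a : R) v : 0 <= a ->
  dual_norm nrm (a *: v) <= a * dual_norm nrm v.
Proof.
move=> a_ge0; have := dual_norm_sublinear v v a_ge0 (lexx 0).
by rewrite scale0r addr0 mul0r addr0.
Qed.

End is_norm.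

Section Gf.
Variables (R : realType) (n m : nat) (Xi : set 'rV[R]_m).
Variable g : 'rV[R]_n -> 'rV[R]_m -> R.

Lemma Gf_le0P v a x (c : R) :
  (Gf Xi g v a x + c%:E <= 0)%E <->
  forall xi, Xi xi -> dotv v xi - a * g x xi + c <= 0.
Proof.
split=> [G_le0 xi Xxi|G_le0].
  have : ((dotv v xi - a * g x xi)%:E <= Gf Xi g v a x)%E.
    by apply: ereal_sup_ubound; exists xi.
  by rewrite -lee_fin EFinD => /(leeD2r c%:E)/le_trans; apply.
have : (Gf Xi g v a x <= (- c)%:E)%E.
  apply: ge_ereal_sup => _ [xi Xxi <-].
  by rewrite lee_fin -subr_le0 opprK; exact: G_le0.
by move=> /(leeD2r c%:E)/le_trans; apply; rewrite -EFinD addNr.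
Qed.

Lemma Gf_scale_le0 z a x (c : R) : 0 < a ->
  (Gf Xi g z a x + c%:E <= 0)%E ->
  (Gf Xi g (a^-1 *: z) 1 x + (a^-1 * c)%:E <= 0)%E.
Proof.
move=> a_gt0 /Gf_le0P G_le0; apply/Gf_le0P => xi Xxi.
have inv_ge0 : 0 <= a^-1 by rewrite invr_ge0 ltW.
have := mulr_ge0_le0 inv_ge0 (G_le0 xi Xxi).
by rewrite dotvZl mul1r !mulrDr mulrN mulrA mulVf ?gt_eqF // mul1r.
Qed.

Hypothesis g_concave : forall xi, Xi xi -> concave_on setT (g^~ xi).

Lemma Gf_convex_le0 (p : R) v1 v2 x1 x2 (c1 c2 : R) : 0 <= p <= 1 ->
  (Gf Xi g v1 1 x1 + c1%:E <= 0)%E -> (Gf Xi g v2 1 x2 + c2%:E <= 0)%E ->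
  (Gf Xi g (p *: v1 + (1 - p) *: v2) 1 (p *: x1 + (1 - p) *: x2)
     + (p * c1 + (1 - p) * c2)%:E <= 0)%E.
Proof.
move=> p01 /Gf_le0P G1 /Gf_le0P G2; apply/Gf_le0P => xi Xxi.
have /andP[p_ge0 p_le1] := p01.
have q_ge0 : 0 <= 1 - p by rewrite subr_ge0.
have := @g_concave xi Xxi x1 x2 I I p p01.
have := mulr_ge0_le0 p_ge0 (G1 xi Xxi).
have := mulr_ge0_le0 q_ge0 (G2 xi Xxi).
rewrite dotvDl !dotvZl; lra.
Qed.

End Gf.

Section Z_C2.
Variables (R : realType) (n m N T : nat) (nrm : 'rV[R]_m -> R).
Variables (Xi : set 'rV[R]_m) (f : 'I_T -> 'rV[R]_n -> 'rV[R]_m -> R).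
Variables (zeta : 'I_N -> 'rV[R]_m) (eps delta : R).
Hypotheses (nrmP : is_norm nrm) (delta_ge0 : 0 <= delta).

Lemma Z_C2_sub_Zt_C2 : eps < 1 -> (0 < N)%N -> (forall i, Xi (zeta i)) ->
  Z_C2 nrm Xi f zeta eps delta `<=` Zt_C2 nrm Xi f zeta eps delta.
Proof.
move=> eps_lt1 N_gt0 Xzeta x [lam [alpha [s [z [lam_ge0 alpha_ge0 s_ge0 budget hz]]]]].
have alpha_gt0 t : 0 < alpha t.
  rewrite lt0r alpha_ge0 andbT; apply/eqP => alpha_t0.
  have s_ge1 i : 1 <= s i.
    have /Gf_le0P/(_ _ (Xzeta i)) := (hz i t).1.
    by rewrite alpha_t0 mul0r; lra.
  have : 1 <= N%:R^-1 * \sum_i s i.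
    rewrite ler_pdivlMl ?ltr0n // mulr1.
    have -> : N%:R = \sum_(i < N) (1 : R) by rewrite sumr_const card_ord.
    exact: ler_sum.
  by have := mulr_ge0 lam_ge0 delta_ge0; lra.
exists (fun t => (alpha t)^-1), (fun i t => (alpha t)^-1 * s i),
  (fun i t => (alpha t)^-1 *: z i t).
split=> [t|i t|i t]; first by rewrite invr_gt0.
  by rewrite mulr_ge0 ?invr_ge0 ?alpha_ge0 ?s_ge0.
have inv_ge0 : 0 <= (alpha t)^-1 by rewrite invr_ge0 ltW.
have [Gz dual_z] := hz i t.
split.
  have : dual_norm nrm ((alpha t)^-1 *: z i t) * delta
           <= (alpha t)^-1 * (lam * delta).
    rewrite mulrA; apply: ler_wpM2r => //.
    exact: le_trans (dual_normZ_le nrmP _ inv_ge0) (ler_wpM2l inv_ge0 dual_z).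
  have := ler_wpM2l inv_ge0 budget.
  by rewrite -mulr_sumr; lra.
have := Gf_scale_le0 (alpha_gt0 t) Gz.
by rewrite dotvZl; congr (_ + _%:E <= _)%E; ring.
Qed.

Hypothesis f_concave :
  forall t xi, Xi xi -> concave_on setT (fun x => f t x xi).

Lemma convex_Zt_C2 : convex_set (Zt_C2 nrm Xi f zeta eps delta).
Proof.
move=> x1 x2 l; rewrite !inE.
move=> -[a1 [q1 [v1 [a1_gt0 q1_ge0 h1]]]] -[a2 [q2 [v2 [a2_gt0 q2_ge0 h2]]]].
change (Zt_C2 nrm Xi f zeta eps delta
  (l%:num *: (x1 : 'rV[R]_n) + (1 - l%:num) *: x2)).
have : 0 <= l%:num <= 1 by apply/andP.
move: (l%:num) => p p01; have /andP[p_ge0 p_le1] := p01.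
have q_ge0 : 0 <= 1 - p by rewrite subr_ge0.
exists (fun t => p * a1 t + (1 - p) * a2 t),
  (fun i t => p * q1 i t + (1 - p) * q2 i t),
  (fun i t => p *: v1 i t + (1 - p) *: v2 i t).
split=> [t|i t|i t].
- by have := a1_gt0 t; have := a2_gt0 t; nra.
- by rewrite addr_ge0 ?mulr_ge0.
have [c1 G1] := h1 i t; have [c2 G2] := h2 i t.
split.
  have := ler_wpM2r delta_ge0 (dual_norm_sublinear nrmP (v1 i t) (v2 i t) p_ge0 q_ge0).
  have := ler_wpM2l p_ge0 c1; have := ler_wpM2l q_ge0 c2.
  by rewrite big_split /= -!mulr_sumr; lra.
have := Gf_convex_le0 (f_concave t) p01 G1 G2.
by rewrite dotvDl !dotvZl; congr (_ + _%:E <= _)%E; ring.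
Qed.

End Z_C2.

Theorem theorem2 (R : realType) (n m N T : nat)
  (nrm : 'rV[R]_m -> R) (Xi : set 'rV[R]_m)
  (f : 'I_T -> 'rV[R]_n -> 'rV[R]_m -> R)
  (zeta : 'I_N -> 'rV[R]_m) (eps delta : R) :
  is_norm nrm ->
  0 < eps < 1 -> 0 < delta -> (0 < N)%N ->
  Xi !=set0 -> closed Xi -> convex_set Xi ->
  (forall t x, convex_on Xi (f t x)) ->
  (forall t x, {within Xi, continuous (f t x)}) ->
  (forall t xi, Xi xi -> concave_on setT (fun x => f t x xi)) ->
  (forall t xi, Xi xi -> continuous (fun x => f t x xi)) ->
  (forall i, Xi (zeta i)) ->
  Z_C2 nrm Xi f zeta eps delta `<=` Zt_C2 nrm Xi f zeta eps delta
  /\ convex_set (Zt_C2 nrm Xi f zeta eps delta).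
Proof.
move=> nrmP /andP[_ eps_lt1] /ltW delta_ge0 N_gt0 _ _ _ _ _ f_concave _ Xzeta.
split; first exact: Z_C2_sub_Zt_C2.
exact: convex_Zt_C2.
Qed.
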